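(* Let $\mathcal{M}=(S,P,E,s_{init},L)$ be a CTMC with $E(s)=1$ for all $s\in S$, and let $g$ be a unique absorbing goal state. Let $\delta>0$, $c=e^{\delta}>1$ and $\mathcal{M}'=c\cdot\mathcal{M}$. Then for all $t\geq 0$, $$\mathrm{Diff}_t(\mathcal{M}):=\left|\mathrm{Pr}^{\mathcal{M}'}(\lozenge^{\leq t}g)-\mathrm{Pr}^{\mathcal{M}}(\lozenge^{\leq t}g)\right|=\sum_{n=1}^{\infty}p_n\cdot\mathrm{Diff}_t(\mathcal{E}_n),$$ where $p_n$ denotes the probability to reach $g$ after exactly $n$ (discrete) steps.
   Context: A CTMC $(S,P,E,s_{init},L)$ has finite state set $S$, transition probabilities $P\colon S\to\mathrm{Distr}(S)$, exit rates $E\colon S\to\mathbb{R}_{>0}$ (residence time in $s$ is exponential with rate $E(s)$, then a jump to $s'$ with probability $P(s,s')$), initial state $s_{init}$ and labeling $L$. $\mathrm{Pr}^{\mathcal{M}}(\lozenge^{\leq t}g)$ is the probability that $\mathcal{M}$, started in its initial state, reaches $g$ within time $t$. For $c>0$, $c\cdot\mathcal{M}$ is the CTMC obtained from $\mathcal{M}$ by multiplying all exit rates by $c$. $p_n$ is the probability that the embedded jump chain of $\mathcal{M}$ started in $s_{init}$ enters $g$ for the first time at step exactly $n$. For $n\in\mathbb{N}$, the Erlang CTMC $\mathcal{E}_n$ has non-goal states $s_0,\dots,s_{n-1}$ and goal state $s_n=g$, initial state $s_0$ ($\mathcal{E}_0$ consists only of $g$), all $s_0,\dots,s_{n-1}$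 carry the same label and $g$ a different one, all exit rates equal $1$, $P(s_i,s_{i+1})=1$ for $i<n$ and $P(g,g)=1$. $\mathrm{Diff}_t(\mathcal{E}_n):=|\mathrm{Pr}^{\mathcal{E}_n}(\lozenge^{\leq t}g)-\mathrm{Pr}^{c\cdot\mathcal{E}_n}(\lozenge^{\leq t}g)|$. *)

From HB Require Import structures.
From mathcomp Require Import all_boot all_order all_algebra.
From mathcomp Require Import all_classical all_reals all_analysis.
Set Implicit Arguments. Unset Strict Implicit. Unset Printing Implicit Defensive.
Import Order.TTheory GRing.Theory Num.Theory.
Import numFieldNormedType.Exports.
Local Open Scope classical_set_scope.
Local Open Scope ring_scope.

(* A CTMC over a finite state type S is given by
   P : S -> S -> R (transition probabilities of the embedded jump chain),
   E : S -> R (exit rates), an initial state, and a (unique) goal state g. *)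

Definition is_stochastic (R : realType) (S : finType) (P : S -> S -> R) :=
  (forall s s', 0 <= P s s') /\ (forall s, \sum_(s' : S) P s s' = 1).

(* first_hit_time P E g k s t : probability that the CTMC started in s enters
   g for the first time at (discrete) step exactly k, and does so within
   time t.  Path semantics: residence in a non-goal state s is Exp(E s)
   distributed (density E s * exp(-E s x)), independent of the rest, then a
   jump to s' with probability P s s'. *)
Fixpoint first_hit_time (R : realType) (S : finType) (P : S -> S -> R)
    (E : S -> R) (g : S) (k : nat) (s : S) (t : R) : R :=
  match k with
  | 0%N => (s == g)%:R
  | k'.+1 =>
      (s != g)%:R *
      Rintegral (@lebesgue_measure R) `[0, t]
        (fun x => E s * expR (- (E s * x)) *
                  \sum_(s' : S) P s s' * first_hit_time P E g k' s' (t - x))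
  end.

(* Pr^M(<>^{<= t} g): the events "g first entered at step k within time t"
   are disjoint for different k, and their union is the event of reaching g
   within time t. *)
Definition reach_prob (R : realType) (S : finType) (P : S -> S -> R)
    (E : S -> R) (s_init g : S) (t : R) : R :=
  limn (fun N => \sum_(0 <= k < N) first_hit_time P E g k s_init t).

Definition scale_rates (R : realType) (S : finType) (c : R) (E : S -> R) : S -> R :=
  fun s => c * E s.

Fixpoint first_hit_step (R : realType) (S : finType) (P : S -> S -> R)
    (g : S) (n : nat) (s : S) : R :=
  match n with
  | 0%N => (s == g)%:R
  | n'.+1 => (s != g)%:R * \sum_(s' : S) P s s' * first_hit_step P g n' s'
  end.

(* Erlang CTMC E_n: states s_0..s_n = 'I_n.+1, goal g = s_n = ord_max,
   initial s_0 = ord0, rates 1, P(s_i, s_{i+1}) = 1, P(g,g) = 1. *)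
Definition erlang_P (R : realType) (n : nat) (i j : 'I_n.+1) : R :=
  if i == ord_max then (j == ord_max)%:R else (val j == (val i).+1)%:R.

Definition erlang_E (R : realType) (n : nat) : 'I_n.+1 -> R := fun _ => 1.

Definition erlang_diff (R : realType) (c : R) (n : nat) (t : R) : R :=
  `| reach_prob (@erlang_P R n) (@erlang_E R n) ord0 ord_max t
     - reach_prob (@erlang_P R n) (scale_rates c (@erlang_E R n)) ord0 ord_max t |.

From HB Require Import structures.
From mathcomp Require Import all_boot all_order all_algebra.
From mathcomp Require Import all_classical all_reals all_analysis.
From mathcomp Require Import ring.
Import Order.TTheory GRing.Theory Num.Theory.
Import numFieldNormedType.Exports.
Local Open Scope ring_scope.

(* With a constant exit rate [lam], the sojourn times are i.i.d. Exp([lam]) and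
   independent of the jump chain, so "g is first entered at jump k, within time
   t" has probability p_k * F_k(lam t), where F_k(v) = 1 - e^(-v) sum_(j<k) v^j/j!
   is the Erlang-k distribution function: the recursion defining
   [first_hit_time] is the convolution identity
   F_(k+1)(lam t) = int_0^t lam e^(-lam x) F_k(lam (t - x)) dx,
   which follows from the fundamental theorem of calculus.  Hence
   Pr(<>^{<=t} g) = sum_k p_k F_k(lam t) for M (lam = 1) and for c.M (lam = c).
   The chain E_n reaches its goal in exactly n jumps, so
   Diff_t(E_n) = F_n(c t) - F_n(t), which is nonnegative since F_n is
   nondecreasing and c >= 1; subtracting the two series termwise gives the
   claim. *)

Section Calculus.
Context {R : realType}.

Lemma derivable1_continuous (f : R -> R) (x : R) :
  derivable f x 1 -> {for x, continuous f}.
Proof. by move=> /derivable1_diffP/differentiable_continuous. Qed.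

Lemma is_derive_expRN (x : R) :
  is_derive x 1 (fun z => expR (- z)) (- expR (- x)).
Proof.
have h := is_derive1_comp (is_derive_expR _) (is_deriveN (is_derive_id x 1)).
by apply: is_derive_eq h _; rewrite mulrN1.
Qed.

Lemma Rintegral_itv_is_derive (f F : R -> R) (a b : R) :
  a <= b -> continuous f -> (forall x : R, is_derive x 1 F (f x)) ->
  Rintegral lebesgue_measure `[a, b]%classic f = F b - F a.
Proof.
rewrite le_eqVlt => /predU1P[<- _ _|ab cf dF].
  by rewrite set_itv1 Rintegral_set1 subrr.
have dFx (x : R) : derivable F x 1 by case: (dF x).
rewrite /Rintegral (@continuous_FTC2 _ f F _ _ ab) -?EFinB //.
- exact: continuous_subspaceT.
- split=> [x _ //||].
  + exact/cvg_at_right_filter/derivable1_continuous.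
  + exact/cvg_at_left_filter/derivable1_continuous.
- by move=> x _; rewrite derive1E; case: (dF x) => _ ->.
Qed.

End Calculus.

Section ErlangCdf.
Context {R : realType}.

Fixpoint exp_partial_sum (k : nat) (y : R) : R :=
  if k is k'.+1 then exp_partial_sum k' y + y ^+ k' / k'`!%:R else 0.

Lemma exp_partial_sum_ge0 k (y : R) : 0 <= y -> 0 <= exp_partial_sum k y.
Proof.
move=> y0; elim: k => [|k IHk] //=.
by rewrite addr_ge0 ?divr_ge0 ?exprn_ge0.
Qed.

Lemma exp_partial_sumS0 k : exp_partial_sum k.+1 0 = 1.
Proof.
elim: k => [|k /= ->]; first by rewrite /= add0r expr0 fact0 divr1.
by rewrite expr0n mul0r addr0.
Qed.

Lemma is_derive_exp_partial_sum k (y : R) :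
  is_derive y 1 (exp_partial_sum k.+1) (exp_partial_sum k y).
Proof.
elim: k y => [|k IHk] y.
  have -> : exp_partial_sum 1 = cst 1.
    by apply/funext => z; rewrite /= add0r expr0 fact0 divr1.
  exact: is_derive_cst.
have hX : is_derive y 1 (fun z : R => z ^+ k.+1) (k.+1%:R * y ^+ k).
  apply: is_derive_eq (derivableP (@exprn_derivable R k.+1 y 1)) _.
  by rewrite exp_derive [_ *: 1]mulr1.
have hc := is_derive_cst (k.+1`!%:R^-1 : R) y 1.
apply: is_derive_eq (is_deriveD (IHk y) (is_deriveM hX hc)) _.
rewrite /= scaler0 add0r factS natrM invfM /GRing.scale /=.
by rewrite mulrAC mulKf ?pnatr_eq0.
Qed.

Lemma derivable_exp_partial_sum k (y : R) : derivable (exp_partial_sum k) y 1.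
Proof.
case: k => [|k]; first exact: (derivable_cst 0).
by case: (is_derive_exp_partial_sum k y).
Qed.

Definition erlang_cdf (k : nat) (v : R) : R := 1 - expR (- v) * exp_partial_sum k v.

Lemma erlang_cdf0 (v : R) : erlang_cdf 0 v = 1.
Proof. by rewrite /erlang_cdf mulr0 subr0. Qed.

Lemma erlang_cdfS0 k : erlang_cdf k.+1 0 = 0.
Proof. by rewrite /erlang_cdf oppr0 expR0 exp_partial_sumS0 mulr1 subrr. Qed.

Lemma is_derive_erlang_cdf k (v : R) :
  is_derive v 1 (erlang_cdf k.+1) (expR (- v) * (v ^+ k / k`!%:R)).
Proof.
have h := is_deriveM (is_derive_expRN v) (is_derive_exp_partial_sum k v).
apply: is_derive_eq (is_deriveB (is_derive_cst (1 : R) v 1) h) _.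
rewrite /GRing.scale /=; ring.
Qed.

Lemma derivable_erlang_cdf k (v : R) : derivable (erlang_cdf k) v 1.
Proof.
have h := is_deriveM (is_derive_expRN v)
  (derivableP (derivable_exp_partial_sum k v)).
by case: (is_deriveB (is_derive_cst (1 : R) v 1) h).
Qed.

Lemma erlang_cdf_le k (u v : R) :
  0 <= u -> u <= v -> erlang_cdf k u <= erlang_cdf k v.
Proof.
case: k => [|k] u0 uv; first by rewrite !erlang_cdf0.
apply: (@ger0_derive1_le_cc _ _ u v); rewrite ?in_itv /= ?lexx ?uv //.
- by move=> x _; case: (is_derive_erlang_cdf k x).
- move=> x; rewrite in_itv /= => /andP[ux _].
  have x0 : 0 <= x by rewrite (le_trans u0) ?ltW.
  rewrite derive1E; case: (is_derive_erlang_cdf k x) => _ ->.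
  by rewrite mulr_ge0 ?expR_ge0 ?divr_ge0 ?exprn_ge0.
- exact: derivable_within_continuous (fun v _ => derivable_erlang_cdf _ v).
Qed.

Lemma erlang_cdf_ge0 k (v : R) : 0 <= v -> 0 <= erlang_cdf k v.
Proof.
case: k => [|k] v0; first by rewrite erlang_cdf0.
by rewrite -(erlang_cdfS0 k) erlang_cdf_le.
Qed.

Lemma erlang_cdf_le1 k (v : R) : 0 <= v -> erlang_cdf k v <= 1.
Proof.
move=> v0; rewrite /erlang_cdf lerBlDr lerDl.
by rewrite mulr_ge0 ?expR_ge0 ?exp_partial_sum_ge0.
Qed.

Lemma erlang_cdf_convolution k (lam C t : R) : 0 <= t ->
  Rintegral lebesgue_measure `[0, t]%classic
    (fun x => lam * expR (- (lam * x)) * (C * erlang_cdf k (lam * (t - x))))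
  = C * erlang_cdf k.+1 (lam * t).
Proof.
move=> t0.
have hlin (x : R) : is_derive x 1 (fun z => lam * z) lam.
  apply: is_derive_eq (is_deriveZ lam (is_derive_id x 1)) _.
  by rewrite /GRing.scale /= mulr1.
have hlinN (x : R) : is_derive x 1 (fun z => lam * (t - z)) (- lam).
  have h := is_deriveB (is_derive_cst t x 1) (is_derive_id x 1).
  apply: is_derive_eq (is_deriveZ lam h) _.
  by rewrite /GRing.scale /= sub0r mulrN1.
have hexp (x : R) :
    is_derive x 1 (fun z => expR (- (lam * z))) (- expR (- (lam * x)) * lam).
  exact: is_derive1_comp (is_derive_expRN _) (hlin x).
pose F x := C * (- expR (- (lam * x))
                 + expR (- (lam * t)) * exp_partial_sum k.+1 (lam * (t - x))).
pose f x := lam * expR (- (lam * x)) * (C * erlang_cdf k (lam * (t - x))).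
have cf : continuous f.
  move=> x; apply: derivable1_continuous.
  have hG := is_derive1_comp (g := fun z : R => lam * (t - z))
    (derivableP (derivable_erlang_cdf k (lam * (t - x)))) (hlinN x).
  by case: (is_deriveM (is_deriveM (is_derive_cst lam x 1) (hexp x))
                      (is_deriveM (is_derive_cst C x 1) hG)).
have dF (x : R) : is_derive x 1 F (f x).
  have hq := is_derive1_comp (g := fun z : R => lam * (t - z))
    (is_derive_exp_partial_sum k (lam * (t - x))) (hlinN x).
  have hF := is_deriveZ C
    (is_deriveD (is_deriveN (hexp x)) (is_deriveZ (expR (- (lam * t))) hq)).
  apply: is_derive_eq hF _.
  have expRt : expR (- (lam * t)) = expR (- (lam * x)) * expR (- (lam * (t - x))).
    by rewrite -expRD; congr expR; ring.
  rewrite /GRing.scale /= /f expRt /erlang_cdf; ring.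
rewrite (Rintegral_itv_is_derive _ _ _ _ t0 cf dF) /F subrr mulr0 exp_partial_sumS0.
by rewrite oppr0 addr0 expR0 /erlang_cdf; ring.
Qed.

End ErlangCdf.

Set Implicit Arguments. Unset Strict Implicit.

Section FirstHit.
Variables (R : realType) (S : finType) (P : S -> S -> R) (g : S).

Lemma first_hit_step_ge0 k s :
  (forall s s', 0 <= P s s') -> 0 <= first_hit_step P g k s.
Proof.
move=> P0; elim: k s => [|k IHk] s /=; first exact: ler0n.
by rewrite mulr_ge0 ?sumr_ge0 // => s' _; rewrite mulr_ge0.
Qed.

Lemma sum_first_hit_step_le1 N s :
  is_stochastic P -> \sum_(0 <= k < N) first_hit_step P g k s <= 1.
Proof.
move=> [P0 P1]; elim: N s => [|N IHN] s; first by rewrite big_geq.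
rewrite big_nat_recl //= -big_distrr /= exchange_big /=.
under eq_bigr do rewrite -big_distrr /=.
have le1 : \sum_(s' : S) P s s' * \sum_(0 <= k < N) first_hit_step P g k s' <= 1.
  by rewrite -(P1 s); apply: ler_sum => s' _; rewrite ler_piMr.
by case: (s =P g) => _ /=; rewrite ?mul0r ?addr0 ?add0r ?mul1r.
Qed.

Lemma is_cvg_first_hit_mixture (w : nat -> R) s :
  is_stochastic P -> (forall k, 0 <= w k <= 1) ->
  cvgn (fun N => \sum_(0 <= k < N) first_hit_step P g k s * w k).
Proof.
move=> hP w01; have P0 := proj1 hP.
apply: nondecreasing_is_cvgn.
  apply: nondecreasing_series => k _ _.
  by have /andP[w0 _] := w01 k; rewrite mulr_ge0 ?first_hit_step_ge0.
exists 1 => _ [N _ <-]; apply: le_trans (sum_first_hit_step_le1 N s hP).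
apply: ler_sum => k _; have /andP[_ w1] := w01 k.
by rewrite ler_piMr ?first_hit_step_ge0.
Qed.

Lemma first_hit_time_const_rate (E : S -> R) (lam : R) k s u :
  (forall s, E s = lam) -> 0 <= u ->
  first_hit_time P E g k s u = first_hit_step P g k s * erlang_cdf k (lam * u).
Proof.
move=> hE; elim: k s u => [|k IHk] s u u0 /=; first by rewrite erlang_cdf0 mulr1.
rewrite hE -mulrA -erlang_cdf_convolution //; congr (_ * _).
apply: eq_Rintegral => x; rewrite inE /= in_itv /= => /andP[_ xu].
rewrite big_distrl /=; congr (_ * _); apply: eq_bigr => s' _.
by rewrite IHk ?subr_ge0 // mulrA.
Qed.

Lemma reach_prob_const_rate (E : S -> R) (lam : R) s t :
  (forall s, E s = lam) -> 0 <= t ->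
  reach_prob P E s g t =
  limn (fun N => \sum_(0 <= k < N) first_hit_step P g k s * erlang_cdf k (lam * t)).
Proof.
move=> hE t0; congr (limn _); apply/funext => N.
by apply: eq_bigr => k _; exact: first_hit_time_const_rate.
Qed.

End FirstHit.

Lemma first_hit_step_erlang (R : realType) n k (i : 'I_n.+1) :
  first_hit_step (@erlang_P R n) ord_max k i = (k == (n - i)%N)%:R.
Proof.
elim: k i => [|k IHk] i /=.
  by rewrite -val_eqE /= eqn_leq -ltnS ltn_ord -subn_eq0 eq_sym.
have [->|ne] := eqVneq i ord_max; first by rewrite subnn mul0r.
have lt_in : (i < n)%N by rewrite ltn_neqAle -ltnS ltn_ord andbT.
have lt_i1 : (i.+1 < n.+1)%N by [].
rewrite mul1r (bigD1 (Ordinal lt_i1)) //= big1 => [|j neq_j].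
  by rewrite /erlang_P (negbTE ne) eqxx mul1r IHk addr0 -(subnSK lt_in) eqSS.
move: neq_j; rewrite /erlang_P (negbTE ne) -val_eqE /= => /negbTE ->.
by rewrite mul0r.
Qed.

Lemma reach_prob_erlang (R : realType) n (E : 'I_n.+1 -> R) (lam t : R) :
  (forall i, E i = lam) -> 0 <= t ->
  reach_prob (@erlang_P R n) E ord0 ord_max t = erlang_cdf n (lam * t).
Proof.
move=> hE t0; rewrite (reach_prob_const_rate _ _ _ hE t0).
apply: cvg_lim; first exact: Rhausdorff.
apply: cvg_near_cst; exists n.+1 => // N /= ltnN.
rewrite (bigD1_seq n) ?mem_index_iota ?iota_uniq //= first_hit_step_erlang.
rewrite subn0 eqxx mul1r big1_seq ?addr0 // => k /andP[/negbTE nk _].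
by rewrite first_hit_step_erlang subn0 nk mul0r.
Qed.

Lemma erlang_diffE (R : realType) (c : R) n t : 1 <= c -> 0 <= t ->
  erlang_diff c n t = erlang_cdf n (c * t) - erlang_cdf n t.
Proof.
move=> c1 t0.
have hEc i : scale_rates c (@erlang_E R n) i = c by rewrite /scale_rates mulr1.
rewrite /erlang_diff (reach_prob_erlang (fun=> erefl) t0) (reach_prob_erlang hEc t0).
rewrite mul1r distrC ger0_norm // subr_ge0 erlang_cdf_le //.
by rewrite -{1}[t]mul1r ler_wpM2r.
Qed.

Theorem theorem5 (R : realType) (S : finType) (P : S -> S -> R) (E : S -> R)
    (s_init g : S) (delta c t : R) :
  is_stochastic P ->
  (forall s, E s = 1) ->
  P g g = 1 ->
  0 < delta ->
  c = expR delta ->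
  0 <= t ->
  `| reach_prob P (scale_rates c E) s_init g t - reach_prob P E s_init g t |
  = limn (fun N => \sum_(1 <= n < N) first_hit_step P g n s_init * erlang_diff c n t).
Proof.
move=> hP hE _ delta_gt0 c_def t0.
have c1 : 1 <= c by rewrite c_def -expR0 ler_expR ltW.
have hEc s : scale_rates c E s = c by rewrite /scale_rates hE mulr1.
pose mix v N := \sum_(0 <= k < N) first_hit_step P g k s_init * erlang_cdf k v.
have cvg_mix v : 0 <= v -> cvgn (mix v).
  move=> v0; apply: is_cvg_first_hit_mixture => // k.
  by rewrite erlang_cdf_ge0 ?erlang_cdf_le1.
have ct0 : 0 <= c * t by rewrite mulr_ge0 // (le_trans ler01 c1).
have mix_diff N : \sum_(1 <= n < N) first_hit_step P g n s_init * erlang_diff c n t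
                  = mix (c * t) N - mix t N.
  case: N => [|N]; first by rewrite /mix !big_geq ?subrr.
  rewrite /mix -sumrB [in RHS]big_ltn //= !erlang_cdf0 subrr add0r.
  by apply: eq_bigr => n _; rewrite erlang_diffE // mulrBr.
have -> : (fun N => \sum_(1 <= n < N) first_hit_step P g n s_init * erlang_diff c n t)
          = mix (c * t) - mix t by apply/funext => N; exact: mix_diff.
rewrite (reach_prob_const_rate _ _ _ hEc t0) (reach_prob_const_rate _ _ _ hE t0) mul1r.
have cvg_ct := cvg_mix _ ct0; have cvg_t := cvg_mix _ t0.
rewrite limB // ger0_norm // subr_ge0.
apply: ler_lim => //; apply: nearW => N.
have P0 := proj1 hP; apply: ler_sum => k _.
rewrite ler_wpM2l ?first_hit_step_ge0 //.
by rewrite erlang_cdf_le // -{1}[t]mul1r ler_wpM2r.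
Qed.
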